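(* Let $b,c\in\mathbb{Z}$ and $d=b^2-4c$. For every positive integer $n$, $$nT_n(b,c)T_{n-1}(b,c)=b\sum_{j=0}^{n-1}(n-j)\binom{n+j}{2j}\binom{2j}{j}^2c^jd^{n-1-j}.$$
   Context: $T_n(b,c)$ is the coefficient of $x^n$ in $(x^2+bx+c)^n$, i.e. $T_n(b,c)=\sum_{k=0}^{\lfloor n/2\rfloor}\binom{n}{2k}\binom{2k}{k}b^{n-2k}c^k$. *)

From mathcomp Require Import all_boot all_order all_algebra.
Set Implicit Arguments. Unset Strict Implicit. Unset Printing Implicit Defensive.
Import Order.TTheory GRing.Theory Num.Theory.
Local Open Scope ring_scope.

(* T_n(b,c) = sum_{k=0}^{floor(n/2)} C(n,2k) C(2k,k) b^(n-2k) c^k,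
   the coefficient of x^n in (x^2+bx+c)^n. *)
Definition T (n : nat) (b c : int) : int :=
  \sum_(0 <= k < (n./2).+1) ('C(n, k.*2) * 'C(k.*2, k))%:R * b ^+ (n - k.*2) * c ^+ k.

From mathcomp Require Import all_boot all_order all_algebra.
From mathcomp Require Import ring lra zify.

(* Put d = b^2 - 4c and
     U_n = sum_j C(n+j, 2j) C(2j, j)^2 c^j d^(n-j),
     S_n = sum_j (n+1-j) C(n+1+j, 2j) C(2j, j)^2 c^j d^(n-j).
   Using the three-term recurrence (n+2) T_(n+2) = (2n+3) b T_(n+1) - (n+1) d T_n,
   one proves simultaneously by induction that T_n^2 = U_n and
   (n+1) T_(n+1) T_n = b S_n.  After expanding, each induction step compares
   coefficients of c^j d^(n-j); the resulting identities between neighbouring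
   coefficients are checked in Q by writing every coefficient as a rational
   multiple of a single one. *)

Set Implicit Arguments.
Unset Strict Implicit.
Unset Printing Implicit Defensive.

Import Order.TTheory GRing.Theory Num.Theory.
Local Open Scope ring_scope.

Definition wsum {R : comRingType} (x y : R) (w n : nat) (f : nat -> R) : R :=
  \sum_(0 <= k < n.+1) f k * x ^+ (n - w * k) * y ^+ k.

Section WeightedSums.
Variables (R : comRingType) (x y : R) (w : nat).
Hypothesis w_gt0 : (0 < w)%N.

Lemma eq_wsum n f g :
  (forall k, (k <= n)%N -> f k = g k) -> wsum x y w n f = wsum x y w n g.
Proof. by move=> fg; apply: eq_big_nat => k /andP[_ le_kn]; rewrite fg. Qed.

Lemma wsumD n f g : wsum x y w n (fun k => f k + g k) = wsum x y w n f + wsum x y w n g.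
Proof. by rewrite -big_split; apply: eq_bigr => k _; rewrite !mulrDl. Qed.

Lemma wsumZ n a f : wsum x y w n (fun k => a * f k) = a * wsum x y w n f.
Proof. by rewrite big_distrr; apply: eq_bigr => k _; rewrite -!mulrA. Qed.

Lemma wsum_mulx n f : (forall k, (n < w * k)%N -> f k = 0) ->
  x * wsum x y w n f = wsum x y w n.+1 f.
Proof.
move=> f0; rewrite /wsum [in RHS]big_nat_recr //= f0 ?mul0r ?addr0 ?leq_pmull //.
rewrite big_distrr; apply: eq_bigr => k _ /=.
have [le_wk_n|lt_n_wk] := leqP (w * k) n; last by rewrite f0 // !mul0r mulr0.
by rewrite subSn // exprS; ring.
Qed.

Lemma wsum_muly n f : (forall k, (n < w * k)%N -> f k = 0) ->
  y * wsum x y w n f = wsum x y w (n + w) (fun k => if k is i.+1 then f i else 0).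
Proof.
move=> f0; rewrite /wsum [in RHS]big_nat_recl //= !mul0r add0r.
rewrite [in RHS](big_cat_nat _ (n := n.+1)) //=; last by lia.
rewrite [X in _ + X]big1_seq ?addr0; last first.
  move=> k /andP[_]; rewrite mem_index_iota => /andP[lt_nk _].
  by rewrite f0 ?mul0r // (leq_trans lt_nk) ?leq_pmull.
rewrite big_distrr; apply: eq_bigr => k _ /=.
by rewrite mulnS addnC subnDl exprS; ring.
Qed.
End WeightedSums.

Lemma natr_bin_down n m :
  'C(n, m)%:R = (n.+1%:R - m%:R) / n.+1%:R * 'C(n.+1, m)%:R :> rat.
Proof.
have E : n.+1%:R * 'C(n, m)%:R = (n.+1%:R - m%:R) * 'C(n.+1, m)%:R :> rat.
  rewrite -natrM (mul_bin_down n.+1).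
  have [le_mn|lt_nm] := leqP m n.+1; first by rewrite natrM natrB.
  by rewrite bin_small // muln0 mulr0.
by rewrite mulrAC -E mulrAC mulfV ?mul1r ?pnatr_eq0.
Qed.

Lemma natr_bin_diag n m :
  'C(n, m)%:R = m.+1%:R / n.+1%:R * 'C(n.+1, m.+1)%:R :> rat.
Proof.
by rewrite mulrAC -natrM -(mul_bin_diag n.+1) natrM mulrAC mulfV ?mul1r ?pnatr_eq0.
Qed.

Lemma natr_bin_center k :
  'C(k.*2, k)%:R = k.+1%:R / (2 * k.*2.+1)%:R * 'C(k.+1.*2, k.+1)%:R :> rat.
Proof.
rewrite natr_bin_diag doubleS natr_bin_down -mul2n; field.
by have := ler0n rat k; lra.
Qed.

(* Locked, so that rewriting with [natrM] cannot unfold a coefficient into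
   its binomial factors. *)
Fact Tcoef_key : unit. Proof. by []. Qed.
Definition Tcoef := locked_with Tcoef_key (fun n k => 'C(n, k.*2) * 'C(k.*2, k))%N.
Canonical Tcoef_unlockable := [unlockable fun Tcoef].

Fact Ucoef_key : unit. Proof. by []. Qed.
Definition Ucoef :=
  locked_with Ucoef_key (fun n j => 'C(n + j, j.*2) * 'C(j.*2, j) ^ 2)%N.
Canonical Ucoef_unlockable := [unlockable fun Ucoef].

Lemma Tcoef_eq0 n k : (n < k.*2)%N -> Tcoef n k = 0%N.
Proof. by move=> lt_nk; rewrite unlock bin_small. Qed.

Lemma Tcoef_0 n : Tcoef n 0 = 1%N.
Proof. by rewrite unlock !bin0. Qed.

Lemma Ucoef_eq0 n j : (n < j)%N -> Ucoef n j = 0%N.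
Proof. by move=> lt_nj; rewrite unlock bin_small // -addnn ltn_add2r. Qed.

Lemma Ucoef_0 n : Ucoef n 0 = 1%N.
Proof. by rewrite unlock addn0 !bin0. Qed.

Lemma natr_Tcoef_down n k :
  (Tcoef n k)%:R = (n.+1%:R - k.*2%:R) / n.+1%:R * (Tcoef n.+1 k)%:R :> rat.
Proof. by rewrite !unlock !natrM (natr_bin_down n) mulrA. Qed.

Lemma natr_Tcoef_diag n k :
  (Tcoef n k)%:R = k.+1%:R ^+ 2 / (n.+2%:R * n.+1%:R) * (Tcoef n.+2 k.+1)%:R :> rat.
Proof.
rewrite !unlock !natrM (natr_bin_diag n) (natr_bin_diag n.+1) natr_bin_center.
rewrite doubleS -!mul2n; field.
by have := ler0n rat k; have := ler0n rat n; lra.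
Qed.

Lemma natr_Ucoef_down n j :
  (Ucoef n j)%:R = (n.+1%:R - j%:R) / (n + j).+1%:R * (Ucoef n.+1 j)%:R :> rat.
Proof.
rewrite !unlock !natrM (natr_bin_down (n + j)) addSn -mul2n; field.
by have := ler0n rat j; have := ler0n rat n; lra.
Qed.

Lemma natr_Ucoef_diag n j :
  (Ucoef n j)%:R =
    j.+1%:R ^+ 3 / (2 * j.*2.+1 * (n + j).+2 * (n + j).+1)%:R *
    (Ucoef n.+1 j.+1)%:R :> rat.
Proof.
rewrite !unlock !natrM ?natrX (natr_bin_diag (n + j)) (natr_bin_diag (n + j).+1).
rewrite natr_bin_center addSn addnS doubleS -!mul2n; field.
by have := ler0n rat j; have := ler0n rat n; lra.
Qed.

Lemma Tcoef_rec n k :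
  (n.+2 * Tcoef n.+2 k.+1 + n.+1 * Tcoef n k.+1 =
   (2 * n + 3) * Tcoef n.+1 k.+1 + 4 * n.+1 * Tcoef n k)%N.
Proof.
apply/eqP; rewrite -(eqr_nat rat) !(natrM, natrD).
rewrite (natr_Tcoef_down n k.+1) (natr_Tcoef_down n.+1 k.+1) (natr_Tcoef_diag n k).
apply/eqP; rewrite -mul2n; field.
by have := ler0n rat n; lra.
Qed.

Lemma Ucoef_Srec n j : (j <= n.+1)%N ->
  ((n.+2 - j) * Ucoef n.+2 j + (n.+1 - j) * Ucoef n.+1 j =
   (2 * n + 3) * Ucoef n.+1 j)%N.
Proof.
move=> le_jn; apply/eqP; rewrite -(eqr_nat rat) !(natrM, natrD) !natrB ?(leqW le_jn) //.
rewrite (natr_Ucoef_down n.+1 j); apply/eqP; field.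
by have := ler0n rat j; have := ler0n rat n; lra.
Qed.

Lemma Ucoef_rec n j :
  (n.+2 ^ 2 * Ucoef n.+2 j.+1 =
   (2 * n + 3) * j.+1.*2.+1 * Ucoef n.+1 j.+1 +
   4 * (2 * n + 3) * j.*2.+1 * Ucoef n.+1 j + n.+1 ^ 2 * Ucoef n j.+1)%N.
Proof.
apply/eqP; rewrite -(eqr_nat rat) !(natrM, natrD).
rewrite (natr_Ucoef_down n j.+1) (natr_Ucoef_down n.+1 j.+1) (natr_Ucoef_diag n.+1 j).
rewrite doubleS -!mul2n; apply/eqP; field.
by have := ler0n rat j; have := ler0n rat n; lra.
Qed.

Definition Usum {R : comRingType} (c d : R) n := wsum d c 1 n (fun j => (Ucoef n j)%:R).
Definition Ssum {R : comRingType} (c d : R) n :=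
  wsum d c 1 n (fun j => ((n.+1 - j) * Ucoef n.+1 j)%:R).
Definition Wsum {R : comRingType} (c d : R) n :=
  wsum d c 1 n (fun j => (j.*2.+1 * Ucoef n j)%:R).

Section SquareSums.
Variables (R : comRingType) (c d : R).

Lemma Ssum_rec n : Ssum c d n.+1 + d * Ssum c d n = (2 * n + 3)%:R * Usum c d n.+1.
Proof.
rewrite /Ssum /Usum wsum_mulx //; last by move=> j; rewrite mul1n -subn_eq0 => /eqP->.
rewrite -wsumZ -wsumD; apply: eq_wsum => j le_jn.
by rewrite -natrM -natrD Ucoef_Srec.
Qed.

Lemma Wsum_rec n : Wsum c d n.+1 + 2 * d * Ssum c d n = (2 * n + 3)%:R * Usum c d n.+1.
Proof.
rewrite /Wsum /Ssum /Usum -mulrA wsum_mulx //; last first.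
  by move=> j; rewrite mul1n -subn_eq0 => /eqP->.
rewrite -!wsumZ -wsumD; apply: eq_wsum => j le_jn.
rewrite -!natrM -natrD !mulnA -mulnDl; congr (_ * _)%:R; lia.
Qed.

Lemma Usum_0 : Usum c d 0 = 1.
Proof. by rewrite /Usum /wsum big_nat1 Ucoef_0 !expr0 !mulr1. Qed.

Lemma Usum_1 : Usum c d 1 = d + 4 * c.
Proof.
rewrite /Usum /wsum big_nat_recr //= big_nat1 Ucoef_0.
have -> : Ucoef 1 1 = 4%N by rewrite unlock.
by rewrite muln0 muln1 subn0 subnn !expr0 !expr1 mul1r !mulr1.
Qed.

Lemma Ssum_0 : Ssum c d 0 = 1.
Proof. by rewrite /Ssum /wsum big_nat1 Ucoef_0 !expr0 !mulr1. Qed.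

Lemma Usum_rec n :
  n.+2%:R ^+ 2 * Usum c d n.+2 =
  (2 * n + 3)%:R * (d + 4 * c) * Wsum c d n.+1 + n.+1%:R ^+ 2 * d ^+ 2 * Usum c d n.
Proof.
have U0 m : (n <= m)%N -> forall j, (m < 1 * j)%N -> (Ucoef n j)%:R = 0 :> R.
  by move=> le_nm j; rewrite mul1n => lt_mj; rewrite Ucoef_eq0 // (leq_ltn_trans le_nm).
have W0 j : (n.+1 < 1 * j)%N -> (j.*2.+1 * Ucoef n.+1 j)%:R = 0 :> R.
  by rewrite mul1n => /Ucoef_eq0->; rewrite muln0.
rewrite [RHS](_ : _ = (2 * n + 3)%:R * (d * Wsum c d n.+1) +
  (4 * (2 * n + 3))%:R * (c * Wsum c d n.+1) + n.+1%:R ^+ 2 * (d * (d * Usum c d n)));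
  last by ring.
rewrite /Wsum /Usum (wsum_muly _ _ _ W0) // (wsum_mulx _ _ _ W0) // addn1.
rewrite (wsum_mulx _ _ _ (U0 _ (leqnn n))) // (wsum_mulx _ _ _ (U0 _ (leqnSn n))) //.
rewrite -!wsumZ -!wsumD; apply: eq_wsum => -[|j] _ /=.
  by rewrite !Ucoef_0 -mul2n; ring.
by rewrite -!natrX -!natrM -!natrD !mulnA Ucoef_rec.
Qed.
End SquareSums.

Section CentralTrinomial.
Variables b c : int.
Local Notation d := (b ^+ 2 - 4 * c).

Lemma T_wsum n : T n b c = wsum b c 2 n (fun k => (Tcoef n k)%:R).
Proof.
rewrite /T /wsum [in RHS](big_cat_nat _ (n := n./2.+1)) //=; last first.
  by rewrite ltnS -divn2 leq_div.
rewrite [X in _ = _ + X]big1_seq ?addr0; last first.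
  move=> k /andP[_]; rewrite mem_index_iota => /andP[lt_n2k _].
  by rewrite Tcoef_eq0 ?mul0r // -ltn_half_double.
by apply: eq_bigr => k _; rewrite unlock mul2n.
Qed.

Lemma T_rec n :
  n.+2%:R * T n.+2 b c + n.+1%:R * b ^+ 2 * T n b c =
  (2 * n + 3)%:R * b * T n.+1 b c + (4 * n.+1)%:R * c * T n b c.
Proof.
have t0 m : (n <= m)%N -> forall k, (m < 2 * k)%N -> (Tcoef n k)%:R = 0 :> int.
  by move=> le_nm k; rewrite mul2n => lt_mk; rewrite Tcoef_eq0 // (leq_ltn_trans le_nm).
have t1 k : (n.+1 < 2 * k)%N -> (Tcoef n.+1 k)%:R = 0 :> int.
  by rewrite mul2n => /Tcoef_eq0->.
rewrite !T_wsum expr2 -!mulrA (wsum_mulx _ _ _ (t0 _ (leqnn n))) //.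
rewrite (wsum_mulx _ _ _ (t0 _ (leqnSn n))) // (wsum_mulx _ _ _ t1) //.
rewrite (wsum_muly _ _ _ (t0 _ (leqnn n))) // addn2.
rewrite -!wsumZ -!wsumD; apply: eq_wsum => -[|k] _ /=.
  by rewrite !Tcoef_0; ring.
by rewrite -!natrM -!natrD Tcoef_rec.
Qed.

Lemma T_0 : T 0 b c = 1.
Proof. by rewrite /T big_nat1 double0 !bin0 mulr1 expr0 mulr1. Qed.

Lemma T_1 : T 1 b c = b.
Proof. by rewrite /T big_nat1 double0 !bin0 mulr1 expr1 mul1r. Qed.

Lemma T_sq_prod n :
  [/\ T n b c ^+ 2 = Usum c d n, T n.+1 b c ^+ 2 = Usum c d n.+1 &
      n.+1%:R * T n.+1 b c * T n b c = b * Ssum c d n].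
Proof.
elim: n => [|n [sq_n sq_n1 prod_n]].
  by rewrite T_0 T_1 Usum_0 Usum_1 Ssum_0; split; ring.
have rec : n.+2%:R * T n.+2 b c = (2 * n + 3)%:R * b * T n.+1 b c - n.+1%:R * d * T n b c.
  by apply: (addIr (n.+1%:R * b ^+ 2 * T n b c)); rewrite T_rec; ring.
have prod_n1 : n.+2%:R * T n.+2 b c * T n.+1 b c = b * Ssum c d n.+1.
  transitivity ((2 * n + 3)%:R * b * T n.+1 b c ^+ 2 -
                d * (n.+1%:R * T n.+1 b c * T n b c)).
    by rewrite rec; ring.
  by rewrite sq_n1 prod_n -[Ssum _ _ n.+1](addrK (d * Ssum c d n)) Ssum_rec; ring.
split => //.
apply: (mulfI (_ : n.+2%:R ^+ 2 != 0 :> int)); first by rewrite expf_neq0 // pnatr_eq0.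
transitivity ((2 * n + 3)%:R ^+ 2 * b ^+ 2 * T n.+1 b c ^+ 2 -
  2 * (2 * n + 3)%:R * b * d * (n.+1%:R * T n.+1 b c * T n b c) +
  n.+1%:R ^+ 2 * d ^+ 2 * T n b c ^+ 2).
  by rewrite -exprMn rec; ring.
rewrite sq_n sq_n1 prod_n Usum_rec -[Wsum _ _ n.+1](addrK (2 * d * Ssum c d n)) Wsum_rec.
ring.
Qed.
End CentralTrinomial.

Theorem lemma4p1 (b c : int) (n : nat) (hn : (0 < n)%N) :
  let d := b ^+ 2 - 4 * c in
  n%:R * T n b c * T n.-1 b c =
  b * \sum_(0 <= j < n)
        ((n - j) * 'C(n + j, j.*2) * 'C(j.*2, j) ^ 2)%:R * c ^+ j * d ^+ (n.-1 - j).
Proof.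
move=> d; case: n hn => // n _ /=.
have [_ _ ->] := T_sq_prod b c n.
congr (b * _); apply: eq_bigr => j _.
by rewrite unlock mulnA mul1n mulrAC.
Qed.
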